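(* Let $m,v>0$ and $s\geq 0$. Let $\mathfrak{n}$ be the five-dimensional real Lie algebra with basis $\{E_1,\dots,E_5\}$ whose only non-vanishing brackets (up to antisymmetry) are $$[E_1,E_2]=mE_3+sE_4,\qquad [E_1,E_3]=vE_4,\qquad [E_2,E_3]=vE_5.$$ Equip the corresponding simply connected nilpotent Lie group with the left-invariant Riemannian metric for which $\{E_1,\dots,E_5\}$ is orthonormal. Then this metric is an algebraic Ricci soliton if and only if $$s=0,\qquad v=\tfrac{\sqrt3}{2}m.$$ In that case $$c=-\tfrac32m^2,\qquad D=\mathrm{diag}\big(\tfrac58m^2,\tfrac58m^2,\tfrac54m^2,\tfrac{15}8m^2,\tfrac{15}8m^2\big),$$ where $D$ is written as a matrix with respect to the basis $\{E_1,\dots,E_5\}$.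
   Context: Let $G$ be a Lie group with Lie algebra $\mathfrak{g}$ and let $g$ be a left-invariant Riemannian metric on $G$. Let $\mathrm{Ric}$ denote the $(1,1)$ Ricci tensor of $g$, viewed as a linear endomorphism of $\mathfrak{g}$. The metric $g$ is an algebraic Ricci soliton if there are a real number $c$ and a derivation $D$ of $\mathfrak{g}$ such that $\mathrm{Ric}=c\,\mathrm{Id}+D$. The notation $\mathrm{diag}(a_1,\dots,a_5)$ denotes the diagonal matrix with these entries. *)

From HB Require Import structures.
From mathcomp Require Import all_boot all_order all_algebra.
Set Implicit Arguments. Unset Strict Implicit. Unset Printing Implicit Defensive.
Import Order.TTheory GRing.Theory Num.Theory.
Local Open Scope ring_scope.

(* A real Lie algebra of dimension n presented in a basis E_0..E_(n-1) by its
   structure constants: c i j k = k-th coordinate of [E_i, E_j].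
   Vectors are row vectors 'rV_n (coordinates in the basis E);
   linear endomorphisms are matrices acting on the right: f(x) = x *m A,
   so row j of A is the coordinate vector of f(E_j). *)
Definition structc (R : nzRingType) (n : nat) := 'I_n -> 'I_n -> 'I_n -> R.

Definition bracket (R : nzRingType) n (c : structc R n) (x y : 'rV[R]_n) : 'rV[R]_n :=
  \row_k \sum_i \sum_j x 0 i * y 0 j * c i j k.

Definition is_derivation (R : nzRingType) n (c : structc R n) (D : 'M[R]_n) : Prop :=
  forall x y : 'rV[R]_n,
    bracket c x y *m D = bracket c (x *m D) y + bracket c x (y *m D).

(* Left-invariant metric for which E is orthonormal.  Levi-Civita connection via
   the Koszul formula: 2 g(nabla_{E_i} E_j, E_k) = g([E_i,E_j],E_k) - g([E_j,E_k],E_i)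
   + g([E_k,E_i],E_j).  nabla c i is the matrix of Y |-> nabla_{E_i} Y. *)
Definition nabla (R : fieldType) n (c : structc R n) (i : 'I_n) : 'M[R]_n :=
  \matrix_(j, k) ((c i j k - c j k i + c k i j) / 2%:R).

(* Curvature R(X,Y) = nabla_X nabla_Y - nabla_Y nabla_X - nabla_[X,Y];
   curv c i j is the matrix of Z |-> R(E_i,E_j) Z (row convention). *)
Definition curv (R : fieldType) n (c : structc R n) (i j : 'I_n) : 'M[R]_n :=
  nabla c j *m nabla c i - nabla c i *m nabla c j - \sum_l c i j l *: nabla c l.

(* Ricci tensor ric(Y,Z) = trace(X |-> R(X,Y)Z); since E is orthonormal the
   (1,1) Ricci endomorphism has matrix (ric(E_j,E_k))_{j,k}. *)
Definition ricci (R : fieldType) n (c : structc R n) : 'M[R]_n :=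
  \matrix_(j, k) \sum_i curv c i j k i.

Definition soliton_pair (R : fieldType) n (c : structc R n) (c0 : R) (D : 'M[R]_n) : Prop :=
  is_derivation c D /\ ricci c = c0%:M + D.

Definition alg_ricci_soliton (R : fieldType) n (c : structc R n) : Prop :=
  exists c0 D, soliton_pair c c0 D.

(* The 5-dim nilpotent algebra: basis E_1..E_5 is indexed 0..4.
   [E1,E2] = m E3 + s E4, [E1,E3] = v E4, [E2,E3] = v E5. *)
Definition nil5 (R : nzRingType) (m s v : R) : structc R 5 :=
  fun i j k =>
    match nat_of_ord i, nat_of_ord j, nat_of_ord k with
    | 0, 1, 2 => m | 0, 1, 3 => s | 1, 0, 2 => - m | 1, 0, 3 => - s
    | 0, 2, 3 => v | 2, 0, 3 => - v
    | 1, 2, 4 => v | 2, 1, 4 => - v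
    | _, _, _ => 0
    end.

Definition diag5 (R : nzRingType) (a b c d e : R) : 'M[R]_5 :=
  diag_mx (\row_(i < 5) nth 0 [:: a; b; c; d; e] i).

(** The Koszul formula gives the Ricci endomorphism explicitly: off the
    diagonal it only has the entries [-sv/2] at (E2,E3) and [ms/2] at (E3,E4).
    If [Ric = c Id + D] with [D] a derivation, then [D = Ric - c Id], and the
    derivation rule applied to [[E1,E2] = m E3 + s E4] and [[E1,E3] = v E4]
    yields [msv = 0], [c = -3m^2/2] and [c = -2v^2]; hence [s = 0] and
    [v^2 = 3m^2/4].  Conversely, for these values [Ric - c Id] is diagonal
    with entries [d1, d2, d1 + d2, d1 + d3, d2 + d3], which is a derivation
    since the brackets [E1,E2], [E1,E3], [E2,E3] point along E3, E4, E5. *)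

From mathcomp Require Import all_boot all_order all_algebra ring.
Set Implicit Arguments. Unset Strict Implicit. Unset Printing Implicit Defensive.
Import Order.TTheory GRing.Theory Num.Theory.
Local Open Scope ring_scope.

Section StructureConstants.

Variables (R : nzRingType) (n : nat) (c : structc R n).

Lemma bracket_delta_mxl a y :
  bracket c (delta_mx 0 a) y = \row_k \sum_j y 0 j * c a j k.
Proof.
apply/rowP => k; rewrite !mxE (bigD1 a) //= [X in _ + X]big1 ?addr0.
  by apply: eq_bigr => j _; rewrite !mxE !eqxx mul1r.
by move=> i /negPf ne_ia; apply: big1 => j _; rewrite !mxE ne_ia andbF !mul0r.
Qed.

Lemma bracket_delta_mxr x b :
  bracket c x (delta_mx 0 b) = \row_k \sum_i x 0 i * c i b k.
Proof.
apply/rowP => k; rewrite !mxE; apply: eq_bigr => i _.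
rewrite (bigD1 b) //= big1 ?addr0; first by rewrite !mxE !eqxx mulr1.
by move=> j /negPf ne_jb; rewrite !mxE ne_jb andbF mulr0 mul0r.
Qed.

Lemma bracket_delta_mx a b :
  bracket c (delta_mx 0 a) (delta_mx 0 b) = \row_k c a b k.
Proof.
rewrite bracket_delta_mxl; apply/rowP => k; rewrite !mxE (bigD1 b) //=.
rewrite [X in _ + X]big1 ?addr0; first by rewrite !mxE !eqxx mul1r.
by move=> j /negPf ne_jb; rewrite !mxE ne_jb andbF mul0r.
Qed.

Lemma derivation_delta_mx D a b k : is_derivation c D ->
  \sum_l c a b l * D l k = \sum_i D a i * c i b k + \sum_j D b j * c a j k.
Proof.
move=> /(_ (delta_mx 0 a) (delta_mx 0 b)) /(congr1 (fun u : 'rV_n => u 0 k)).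
rewrite bracket_delta_mx -!rowE bracket_delta_mxl bracket_delta_mxr !mxE.
by under eq_bigr do rewrite mxE; under [X in _ = X + _]eq_bigr do rewrite mxE;
  under [X in _ = _ + X]eq_bigr do rewrite mxE.
Qed.

End StructureConstants.

Lemma soliton_pairP (R : fieldType) n (c : structc R n) c0 D :
  soliton_pair c c0 D <->
  is_derivation c (ricci c - c0%:M) /\ D = ricci c - c0%:M.
Proof.
have D_ricci : ricci c = c0%:M + D -> D = ricci c - c0%:M.
  by move=> ->; rewrite addrC addKr.
split=> [[derD /D_ricci eqD] | [derD ->]]; first by rewrite -eqD.
by split=> //; rewrite addrC subrK.
Qed.

Lemma diag5_derivation (R : comNzRingType) (m v d1 d2 d3 d4 d5 : R) :
  d3 = d1 + d2 -> d4 = d1 + d3 -> d5 = d2 + d3 ->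
  is_derivation (nil5 m 0 v) (diag5 d1 d2 d3 d4 d5).
Proof.
move=> -> -> -> x y; apply/rowP => k.
rewrite /diag5 !mul_mx_diag /bracket !mxE.
case: k => [[|[|[|[|[|k]]]]] ?] //=.
all: rewrite !(mxE, big_ord_recl, big_ord0) /= /nil5 /=; ring.
Qed.

Definition ricci_nil5_mx (R : fieldType) (m s v : R) : 'M[R]_5 :=
  \matrix_(j, k)
    match nat_of_ord j, nat_of_ord k with
    | 0, 0 | 1, 1 => - (m ^+ 2 + s ^+ 2 + v ^+ 2) / 2%:R
    | 1, 2 | 2, 1 => - (s * v) / 2%:R
    | 2, 2 => m ^+ 2 / 2%:R - v ^+ 2
    | 2, 3 | 3, 2 => m * s / 2%:R
    | 3, 3 => (s ^+ 2 + v ^+ 2) / 2%:R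
    | 4, 4 => v ^+ 2 / 2%:R
    | _, _ => 0
    end.

Lemma ricci_nil5 (R : numFieldType) (m s v : R) :
  ricci (nil5 m s v) = ricci_nil5_mx m s v.
Proof.
apply/matrixP => j k; rewrite /ricci /curv !mxE.
rewrite !(summxE, mxE, big_ord_recl, big_ord0) /=.
by case: j => [[|[|[|[|[|j]]]]] ?] //; case: k => [[|[|[|[|[|k]]]]] ?] //=;
  rewrite /nil5 /=; field.
Qed.

Lemma nil5_soliton_constraints (R : numFieldType) (m s v c0 : R) :
  m != 0 -> v != 0 ->
  is_derivation (nil5 m s v) (ricci_nil5_mx m s v - c0%:M) ->
  [/\ s = 0, c0 = - (3%:R / 2%:R) * m ^+ 2 & c0 = - 2%:R * v ^+ 2].
Proof.
move=> m_neq0 v_neq0 derD.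
(* Coordinates E2, E3 of the derivation rule on [E1,E2], coordinate E4 on [E1,E3]. *)
have eqE2 := derivation_delta_mx 0 1 1 derD.
have eqE3 := derivation_delta_mx 0 1 2 derD.
have eqE4 := derivation_delta_mx 0 2 3 derD.
rewrite !big_ord_recl !big_ord0 /= !mxE /nil5 /= in eqE2 eqE3 eqE4.
rewrite !(mul0r, mulr0, addr0, add0r, mulr0n, mulr1n, subr0, oppr0) in eqE2 eqE3 eqE4.
have s0 : s = 0.
  move/eqP: eqE2; rewrite mulf_eq0 (negPf m_neq0) mulf_eq0 invr_eq0 pnatr_eq0.
  by rewrite orbF oppr_eq0 mulf_eq0 (negPf v_neq0) orbF => /eqP.
subst s; move/eqP: eqE3; rewrite -subr_eq0 => /eqP eqE3.
move/eqP: eqE4; rewrite -subr_eq0 => /eqP eqE4.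
have /eqP : m * (c0 + 3%:R / 2%:R * m ^+ 2) = 0 by rewrite -eqE3; field.
rewrite mulf_eq0 (negPf m_neq0) addr_eq0 => /eqP c0_m.
have /eqP : v * (c0 + 2%:R * v ^+ 2) = 0 by rewrite -eqE4; field.
rewrite mulf_eq0 (negPf v_neq0) addr_eq0 => /eqP c0_v.
by split; rewrite // mulNr.
Qed.

Lemma ricci_nil5_soliton_shift (R : numFieldType) (m v : R) :
  v ^+ 2 = 3%:R / 4%:R * m ^+ 2 ->
  ricci_nil5_mx m 0 v - (- (3%:R / 2%:R) * m ^+ 2)%:M =
  diag5 (5%:R / 8%:R * m ^+ 2) (5%:R / 8%:R * m ^+ 2) (5%:R / 4%:R * m ^+ 2)
        (15%:R / 8%:R * m ^+ 2) (15%:R / 8%:R * m ^+ 2).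
Proof.
move=> v2E; apply/matrixP => j k; rewrite /diag5 !mxE.
by case: j => [[|[|[|[|[|j]]]]] ?] //; case: k => [[|[|[|[|[|k]]]]] ?] //=;
  rewrite ?v2E; field.
Qed.

Lemma nil5_soliton_pairP (R : numFieldType) (m s v c0 : R) (D : 'M[R]_5) :
  m != 0 -> v != 0 ->
  soliton_pair (nil5 m s v) c0 D <->
  [/\ s = 0, v ^+ 2 = 3%:R / 4%:R * m ^+ 2, c0 = - (3%:R / 2%:R) * m ^+ 2 &
      D = diag5 (5%:R / 8%:R * m ^+ 2) (5%:R / 8%:R * m ^+ 2) (5%:R / 4%:R * m ^+ 2)
                (15%:R / 8%:R * m ^+ 2) (15%:R / 8%:R * m ^+ 2)].
Proof.
move=> m_neq0 v_neq0; rewrite soliton_pairP ricci_nil5.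
split=> [[derD ->] | [-> v2E -> ->]].
  have [s0 c0_m c0_v] := nil5_soliton_constraints m_neq0 v_neq0 derD.
  have v2E : v ^+ 2 = 3%:R / 4%:R * m ^+ 2.
    apply: (@mulfI _ (- 2%:R)); first by rewrite oppr_eq0 pnatr_eq0.
    by rewrite mulNr -[LHS]mulNr -c0_v c0_m; field.
  by rewrite s0 c0_m ricci_nil5_soliton_shift.
rewrite ricci_nil5_soliton_shift //; split=> //.
by apply: diag5_derivation; field.
Qed.

Lemma sqr_eq_sqrt3_half (R : rcfType) (m v : R) : 0 <= m -> 0 <= v ->
  (v ^+ 2 = 3%:R / 4%:R * m ^+ 2 <-> v = Num.sqrt 3%:R / 2%:R * m).
Proof.
move=> m_ge0 v_ge0.
have sqrE : (Num.sqrt 3%:R / 2%:R * m) ^+ 2 = 3%:R / 4%:R * m ^+ 2.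
  by rewrite exprMn expr_div_n sqr_sqrtr ?ler0n //; field.
have rhs_ge0 : 0 <= Num.sqrt 3%:R / 2%:R * m.
  by apply: mulr_ge0 => //; rewrite divr_ge0 ?sqrtr_ge0.
split=> [v2E | ->] //; apply/eqP.
by rewrite -(@eqrXn2 _ 2) // sqrE v2E.
Qed.

Theorem mainTheorem10 (R : rcfType) (m v s : R) :
  0 < m -> 0 < v -> 0 <= s ->
  (alg_ricci_soliton (nil5 m s v) <-> (s = 0 /\ v = Num.sqrt 3%:R / 2%:R * m)) /\
  (s = 0 /\ v = Num.sqrt 3%:R / 2%:R * m ->
     forall (c0 : R) (D : 'M[R]_5),
       soliton_pair (nil5 m s v) c0 D <->
       (c0 = - (3%:R / 2%:R) * m ^+ 2 /\
        D = diag5 (5%:R / 8%:R * m ^+ 2) (5%:R / 8%:R * m ^+ 2) (5%:R / 4%:R * m ^+ 2)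
                  (15%:R / 8%:R * m ^+ 2) (15%:R / 8%:R * m ^+ 2))).
Proof.
move=> m_gt0 v_gt0 _.
have v_sqrtP := sqr_eq_sqrt3_half (ltW m_gt0) (ltW v_gt0).
have solP c0 D := nil5_soliton_pairP s c0 D (lt0r_neq0 m_gt0) (lt0r_neq0 v_gt0).
split.
  split=> [[c0 [D /solP [s0 /v_sqrtP vE _ _]]] // | [s0 /v_sqrtP v2E]].
  by do 2!eexists; apply/solP.
move=> [s0 /v_sqrtP v2E] c0 D; rewrite solP.
by split=> [[_ _ c0E DE] | [c0E DE]].
Qed.
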